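(* Let $B_k$ denote the number of minimal blocking sets of $\operatorname{PG}(2,q)$ of size $k$. Then for all integers $k$ with $q \leq k \leq 2q$, \[B_k \leq \frac{\binom{q^2 + q + 1}{2k - 2q}}{\binom{k}{2k-2q}}.\]
   Context: $q$ is a prime power and $\operatorname{PG}(2,q)$ is the incidence structure of the $q^2+q+1$ points and $q^2+q+1$ lines of $\mathbb{P}^2$ defined over $\mathbb{F}_q$. A blocking set is a set of points of $\operatorname{PG}(2,q)$ meeting every line of $\operatorname{PG}(2,q)$; it is minimal if no proper subset of it is a blocking set. *)

From HB Require Import structures.
From mathcomp Require Import all_boot all_order all_algebra.
Set Implicit Arguments. Unset Strict Implicit. Unset Printing Implicit Defensive.
Import GRing.Theory Num.Theory.
Local Open Scope ring_scope.

Section PG.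
Variable F : finFieldType.

(* Subspaces of F^3 are represented canonically by <<A>>%MS (square 3x3
   matrices whose row space is the subspace). *)
Definition pg_points : {set 'M[F]_3} :=
  [set (<<A>>%MS : 'M[F]_3) | A : 'M[F]_3 & \rank A == 1%N].

Definition pg_lines : {set 'M[F]_3} :=
  [set (<<A>>%MS : 'M[F]_3) | A : 'M[F]_3 & \rank A == 2%N].

Definition pg_incident (P L : 'M[F]_3) : bool := (P <= L)%MS.

Definition blocking_set (S : {set 'M[F]_3}) : bool :=
  (S \subset pg_points) &&
  [forall L in pg_lines, [exists P in S, pg_incident P L]].

Definition minimal_blocking_set (S : {set 'M[F]_3}) : bool :=
  blocking_set S && [forall T : {set 'M[F]_3}, (T \proper S) ==> ~~ blocking_set T].

Definition nb_min_blocking (k : nat) : nat :=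
  #|[set S : {set 'M[F]_3} | minimal_blocking_set S & #|S| == k]|.
End PG.

(* Two distinct minimal blocking sets S, S' of size k share fewer than
   m = 2k - 2q points, so each m-set of points lies in at most one of them and
   B_k * C(k, m) <= C(q^2 + q + 1, m).  The intersection bound comes from
   |S' \ S| + |S| >= 2q + 1 for P in S \ S'.  Let L be a tangent to S at P and
   choose linear forms f, g, h with L = ker f, P = ker f meet ker g, h(P) = 1.
   The points Q of S \ {P} get affine coordinates (g(Q)/f(Q), h(Q)/f(Q)), and
   blocking the lines h = m g + c f (those missing P) means these |S| - 1
   points meet every non-vertical affine line.  Redei's polynomial then shows
   that they have at most |S| - q distinct first coordinates c.  For each of
   the remaining q - (|S| - q) values of c, the line g = c f through P, as
   well as L itself, must be blocked by a point of S' outside S. *)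

From mathcomp Require Import all_boot all_order all_algebra all_field.
From mathcomp Require Import zify ring.
Set Implicit Arguments. Unset Strict Implicit. Unset Printing Implicit Defensive.
Import GRing.Theory Num.Theory.
Local Open Scope ring_scope.

Section Redei.
Variable F : finFieldType.
Implicit Types (s : seq (F * F)) (p : {poly F}).

(* The Redei polynomial prod (X - b + a U) of the n points (a, b) of s, with U
   the inner variable.  Its homogeneous part of top degree is prod (X + a U),
   whose X^i U^(n - i) coefficient is the X^i coefficient of redei_lead s. *)
Definition redei_poly s : {poly {poly F}} :=
  \prod_(x <- s) ('X - (x.2%:P - x.1 *: 'X)%:P).

Definition redei_lead s : {poly F} := \prod_(x <- s) ('X - (- x.1)%:P).

Lemma redei_lead_monic s : redei_lead s \is monic.
Proof. exact: monic_prod_XsubC. Qed.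

Lemma size_redei_lead s : size (redei_lead s) = (size s).+1.
Proof. exact: size_prod_XsubC. Qed.

Lemma coef_redei_poly s i j : (size s <= i + j)%N ->
  ((redei_poly s)`_i)`_j = if i + j == size s then (redei_lead s)`_i else 0.
Proof.
elim: s i j => [|[a b] s IH] i j /=.
  move=> _; rewrite /redei_poly /redei_lead !big_nil !coefC.
  by case: i => [|i] //=; rewrite coefC; case: j.
move=> hij.
rewrite /redei_poly /redei_lead !big_cons -/(redei_poly s) -/(redei_lead s) /=.
rewrite mulrBl coefB coefXM coefCM coefB.
rewrite [in RHS]mulrBl coefB coefXM coefCM.
have -> : (b%:P - a *: 'X) * (redei_poly s)`_i =
          b%:P * (redei_poly s)`_i - a *: ('X * (redei_poly s)`_i).
  by rewrite mulrBl scalerAl.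
rewrite coefB coefCM coefZ coefXM.
case: i hij => [|i] hij /=.
  rewrite coef0 sub0r mulNr opprK.
  have hj : (size s < j)%N by rewrite add0n in hij.
  rewrite (IH 0%N j) ?add0n ?(ltnW hj) // (gtn_eqF hj) mulr0 sub0r opprK.
  case: j hj hij => [|j] //= hj hij.
  rewrite (IH 0%N j) ?add0n // eqSS add0r.
  by case: eqP => _; rewrite ?mulr0 ?add0r.
rewrite (IH i j); last by lia.
rewrite (IH i.+1 j); last by lia.
rewrite (_ : (i.+1 + j == size s) = false); last by lia.
rewrite (_ : (i.+1 + j == (size s).+1) = (i + j == size s)); last by lia.
rewrite mulr0 sub0r mulNr !opprK.
case: j hij => [|j] hij /=.
  case: eqP => [e|_]; last by rewrite mulr0 addr0.
  have sz : (size (redei_lead s) <= i.+1)%N by rewrite size_redei_lead; lia.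
  by rewrite (nth_default _ sz) !mulr0 !addr0.
rewrite (IH i.+1 j); last by lia.
rewrite (_ : (i.+1 + j == size s) = (i + j.+1 == size s)); last by lia.
by case: eqP => _; rewrite ?mulr0 ?addr0 // mulrC.
Qed.

Lemma redei_poly_eval s u :
  map_poly (horner_eval u) (redei_poly s) =
  \prod_(x <- s) ('X - (x.2 - x.1 * u)%:P).
Proof.
rewrite map_prod_XsubC; apply: eq_bigr => x _.
by rewrite /= horner_evalE !hornerE.
Qed.

Lemma monic_XqsubX : ('X^#|F| - 'X : {poly F}) \is monic.
Proof. by rewrite finField_genPoly monic_prod_XsubC. Qed.

Lemma size_XqsubX : size ('X^#|F| - 'X : {poly F}) = #|F|.+1.
Proof.
by rewrite size_polyDl ?size_polyXn // size_polyN size_polyX ltnS finRing_gt1.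
Qed.

Lemma poly_const_on_finField p c :
  (size p <= #|F|)%N -> (forall u, p.[u] = c) -> p = c%:P.
Proof.
move=> szp pc; apply/eqP; rewrite -subr_eq0; apply: contraT => nz.
have roots : all (root (p - c%:P)) (enum F).
  by apply/allP => u _; rewrite /root !hornerE pc subrr.
have := max_poly_roots nz roots (enum_uniq F); rewrite -cardE ltnNge => /negP[].
apply: leq_trans (size_polyD _ _) _.
rewrite size_polyN size_polyC geq_max szp /=.
by apply: leq_trans (leq_b1 _) (ltnW (finRing_gt1 F)).
Qed.
End Redei.

Section RedeiBound.
Variables (F : finFieldType) (s : seq (F * F)).
Hypothesis meets_lines : forall m c, exists2 x, x \in s & x.2 = x.1 * m + c.
Local Notation q := #|F|.
Local Notation n := (size s).

Lemma redei_eval_factor u : exists2 Q : {poly F}, Q \is monic &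
  \prod_(x <- s) ('X - (x.2 - x.1 * u)%:P) = Q * ('X^q - 'X).
Proof.
set P := \prod_(x <- s) _.
have roots : all (root P) (index_enum F).
  apply/allP => c _; have [x xs e] := meets_lines u c.
  rewrite /root horner_prod prodf_seq_eq0; apply/hasP; exists x => //.
  by rewrite !hornerE e addrAC subrr add0r subrr.
have [|Q eQ] := uniq_roots_prod_XsubC roots.
  by rewrite uniq_rootsE index_enum_uniq.
rewrite -finField_genPoly in eQ; exists Q => //.
by rewrite -(monicMr _ (monic_XqsubX F)) -eQ monic_prod_XsubC.
Qed.

Lemma size_redei_eval_quotient u (Q : {poly F}) : Q \is monic ->
  \prod_(x <- s) ('X - (x.2 - x.1 * u)%:P) = Q * ('X^q - 'X) ->
  size Q + q = n.+1.
Proof.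
move=> Qm eQ; have := congr1 (fun p : {poly F} => size p) eQ.
rewrite size_prod_XsubC size_Mmonic ?(monic_XqsubX F) ?monic_neq0 //.
by rewrite (size_XqsubX F) addnS.
Qed.

Lemma card_field_le_size : (q <= n)%N.
Proof.
have [Q Qm /(size_redei_eval_quotient Qm)] := redei_eval_factor 0.
have : (0 < size Q)%N by rewrite size_poly_gt0 monic_neq0.
lia.
Qed.

Lemma coef_redei_eval_mid u i : (n - q < i < q)%N ->
  ((redei_poly s)`_i).[u] = - (i.-1 == n - q)%N%:R.
Proof.
move=> /andP[lo hi]; have [Q Qm eQ] := redei_eval_factor u.
have szQ := size_redei_eval_quotient Qm eQ.
rewrite -[_.[u]]/(horner_eval u _) -coef_map redei_poly_eval eQ mulrBr coefB.
rewrite coefMXn coefMX hi (gtn_eqF (leq_ltn_trans (leq0n _) lo)) sub0r.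
have [->|ne] := eqVneq i.-1 (n - q)%N.
  have -> : (n - q = (size Q).-1)%N by lia.
  by rewrite -lead_coefE (monicP Qm).
have szQi : (size Q <= i.-1)%N by lia.
by rewrite (nth_default 0 szQi) oppr0.
Qed.

Lemma redei_lead_coef_mid i : (n - q < i < q)%N -> (redei_lead s)`_i = 0.
Proof.
(* Coefficient i of redei_poly s is a polynomial in U of degree at most n - i < q
   that is constant on F, hence constant, so its U^(n - i) coefficient vanishes. *)
move=> mid; have /andP[lo hi] := mid; have qn := card_field_le_size.
have sz : (size ((redei_poly s)`_i)%R <= q)%N.
  apply/leq_sizeP => j hj; rewrite coef_redei_poly; last by lia.
  by have -> : (i + j == n) = false by lia.
have := poly_const_on_finField sz (fun u => coef_redei_eval_mid u mid).
move/(congr1 (fun p : {poly F} => p`_(n - i))); rewrite coef_redei_poly; last by lia.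
have -> : (i + (n - i) == n)%N = true by lia.
by rewrite coefC; have -> : (n - i == 0)%N = false by lia.
Qed.

Lemma card_slopes : (#|[set x.1 | x in s]| + q <= n + 1)%N.
Proof.
have qn := card_field_le_size.
(* psi is H with X^q replaced by X: it agrees with H on F, vanishes at every -a,
   and has degree at most n - q + 1 because the middle coefficients of H vanish. *)
pose H := redei_lead s; pose psi := take_poly q H + 'X * drop_poly q H.
have coef_psi j : psi`_j = (if (j < q)%N then H`_j else 0) +
                           (if j == 0%N then 0 else H`_(j.-1 + q)).
  by rewrite coefD coef_take_poly coefXM coef_drop_poly.
have H_n : H`_n = 1.
  by have /monicP := redei_lead_monic s; rewrite lead_coefE size_redei_lead.
have psi_neq0 : psi != 0.
  apply/eqP => /(congr1 (fun p : {poly F} => p`_(n - q).+1)).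
  rewrite coef_psi coef0 /= subnK // H_n.
  have -> : (if ((n - q).+1 < q)%N then H`_(n - q).+1 else 0) = 0.
    by case: ifP => // h; apply: redei_lead_coef_mid; lia.
  by rewrite add0r => /eqP; rewrite oner_eq0.
have size_psi : (size psi <= (n - q).+2)%N.
  apply/leq_sizeP => j hj; rewrite coef_psi.
  rewrite (_ : j == 0%N = false); last by lia.
  have szH : (size H <= j.-1 + q)%N by rewrite size_redei_lead; lia.
  rewrite (nth_default 0 szH) addr0.
  by case: ifP => h //; rewrite redei_lead_coef_mid //; lia.
have psiE x : psi.[x] = H.[x].
  rewrite -[in RHS](poly_take_drop q H) !hornerE.
  by rewrite expf_card mulrC.
pose A := [set x.1 | x in s].
have roots : all (root psi) [seq - a | a <- enum A].
  apply/allP => y /mapP [a]; rewrite mem_enum => /imsetP [x xs ->] ->.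
  rewrite /root psiE /H horner_prod prodf_seq_eq0; apply/hasP; exists x => //.
  by rewrite !hornerE subrr.
have := max_poly_roots psi_neq0 roots.
rewrite map_inj_uniq ?enum_uniq; last exact: oppr_inj.
rewrite size_map -cardE => /(_ isT) /leq_trans /(_ size_psi).
move: qn; rewrite -/A; set a := #|A|; set r := #|F|; lia.
Qed.
End RedeiBound.

Lemma card_family_bin_bound (T : finType) (U : {set T}) (M : {set {set T}}) k m :
  (forall S, S \in M -> S \subset U /\ #|S| = k) ->
  {in M &, forall S S', S != S' -> (#|S :&: S'| < m)%N} ->
  (#|M| * 'C(k, m) <= 'C(#|U|, m))%N.
Proof.
move=> MU Mint.
pose draws (S : {set T}) := [set A : {set T} | A \subset S & #|A| == m].
have -> : (#|M| * 'C(k, m) = \sum_(S in M) \sum_(A in draws S) 1)%N.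
  rewrite -sum_nat_const; apply: eq_bigr => S /MU[_ <-].
  by rewrite sum1_card cards_draws.
rewrite pair_big_dep /= sum1dep_card -cards_draws.
set pairs := [set _ | _].
have inj : {in pairs &, injective snd}.
  move=> [S1 A] [S2 A'] /[!inE] /= /andP[MS1 /andP[AS1 /eqP cA]].
  move=> /andP[MS2 /andP[AS2 _]] eA; rewrite -{}eA in AS2 *.
  congr pair; apply/eqP; apply: contraT => /(Mint _ _ MS1 MS2); rewrite ltnNge -cA.
  by rewrite subset_leq_card // subsetI AS1.
rewrite -(card_in_imset inj); apply/subset_leq_card/subsetP => A /imsetP[[S A'] + ->].
rewrite !inE /= => /andP[/MU[SU _] /andP[AS ->]]; rewrite andbT.
exact: subset_trans SU.
Qed.

Section ProjectivePlane.
Variable F : finFieldType.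
Implicit Types (P Q L : 'M[F]_3) (x : 'rV[F]_3) (f : 'cV[F]_3).

Definition point_vec P : 'rV[F]_3 := nz_row P.

Definition dot x f : F := (x *m f) 0 0.

Lemma dot_eq0 x f : (x *m f == 0) = (dot x f == 0).
Proof.
rewrite /dot; apply/eqP/eqP => [-> | h]; first by rewrite mxE.
by apply/matrixP => i j; rewrite !ord1 h mxE.
Qed.

Lemma dotD x f1 f2 : dot x (f1 + f2) = dot x f1 + dot x f2.
Proof. by rewrite /dot mulmxDr mxE. Qed.

Lemma dotN x f : dot x (- f) = - dot x f.
Proof. by rewrite /dot mulmxN mxE. Qed.

Lemma dotZ x a f : dot x (a *: f) = a * dot x f.
Proof. by rewrite /dot -scalemxAr mxE. Qed.

Lemma rank_cV f : \rank f = (f != 0).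
Proof. by rewrite -mxrank_tr rank_rV trmx_eq0. Qed.

Lemma pg_pointP P : P \in pg_points F -> point_vec P != 0 /\ P = <<point_vec P>>%MS.
Proof.
case/imsetP => A; rewrite inE => /eqP rA ->.
have r1 : \rank <<A>>%MS = 1%N by rewrite mxrank_gen.
have nz : point_vec <<A>>%MS != 0 by rewrite nz_row_eq0 -mxrank_eq0 r1.
split=> //; have [_] := mxrank_leqif_eq (nz_row_sub <<A>>%MS).
by rewrite rank_rV nz r1 eqxx => /esym/eqmxP e; rewrite (eq_genmx e) genmx_id.
Qed.

Lemma pg_point_gen x P : P \in pg_points F -> x != 0 -> (x <= P)%MS -> P = <<x>>%MS.
Proof.
move=> /pg_pointP [nz E] x0 xP.
have rP : \rank P = 1%N by rewrite E mxrank_gen rank_rV nz.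
have [_] := mxrank_leqif_eq xP; rewrite rP rank_rV x0 eqxx => /esym/eqmxP e.
by rewrite (eq_genmx e) {2}E genmx_id.
Qed.

Lemma pg_point_subE P (M : 'M[F]_3) :
  P \in pg_points F -> (P <= M)%MS = (point_vec P <= M)%MS.
Proof. by case/pg_pointP => _ {1}->; rewrite genmxE. Qed.

Lemma ker_line f : f != 0 -> <<kermx f>>%MS \in pg_lines F.
Proof.
by move=> f0; apply/imsetP; exists (kermx f); rewrite // inE mxrank_ker rank_cV f0.
Qed.

Lemma sub_ker_line x f : (x <= <<kermx f>>)%MS = (dot x f == 0).
Proof. by rewrite genmxE sub_kermx dot_eq0. Qed.

Lemma pg_lineP L : L \in pg_lines F ->
  exists2 f, f != 0 & forall x, (x <= L)%MS = (dot x f == 0).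
Proof.
case/imsetP => A; rewrite inE => /eqP rA ->.
pose K := kermx A^T; pose f := (nz_row K)^T.
have rK : \rank K = 1%N by rewrite mxrank_ker mxrank_tr rA.
have nz : nz_row K != 0 by rewrite nz_row_eq0 -mxrank_eq0 rK.
have AK : (A <= kermx f)%MS.
  rewrite sub_kermx -trmx_eq0 trmx_mul trmxK -sub_kermx; exact: nz_row_sub.
have rk : \rank (kermx f) = 2%N by rewrite mxrank_ker rank_cV trmx_eq0 nz.
exists f; first by rewrite trmx_eq0.
have [_] := mxrank_leqif_eq AK; rewrite rA rk eqxx => /esym/eqmxP e.
by move=> x; rewrite genmxE e sub_kermx dot_eq0.
Qed.

Lemma flag_frame x0 f : x0 != 0 -> f != 0 -> dot x0 f = 0 ->
  exists g h, [/\ dot x0 g = 0, dot x0 h = 1, forall c, g != c *: f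
                & forall x, dot x f = 0 -> dot x g = 0 -> (x <= x0)%MS].
Proof.
move=> x00 f0 x0f.
pose K := kermx x0^T.
have rK : \rank K = 2%N by rewrite mxrank_ker mxrank_tr rank_rV x00.
have rf : \rank f^T = 1%N by rewrite mxrank_tr rank_cV f0.
have [i notKf] : exists i, ~~ (row i K <= f^T)%MS.
  by apply/row_subPn; apply/negP => /mxrankS; rewrite rK rf.
pose g := (row i K)^T.
have x0g : dot x0 g = 0.
  apply/eqP; rewrite -dot_eq0 -trmx_eq0 trmx_mul trmxK -sub_kermx.
  exact: row_sub.
have [h x0h] : exists h, x0 *m h = 1%:M.
  by apply/row_freeP; rewrite /row_free rank_rV x00.
have gf c : g != c *: f.
  apply: contra notKf => /eqP gE; rewrite -[row i K]trmxK -/g gE linearZ /=.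
  exact: scalemx_sub.
exists g, h; split=> // [|x xf xg]; first by rewrite /dot x0h mxE.
pose R := row_mx f g.
have rR : \rank R = 2%N.
  have lt : (f^T < f^T + g^T)%MS.
    rewrite ltmxE addsmxSl /=; apply: contra notKf; rewrite trmxK.
    exact/submx_trans/addsmxSr.
  apply/eqP; rewrite eqn_leq rank_leq_col /= -mxrank_tr tr_row_mx -addsmxE.
  by have := rank_ltmx lt; rewrite rf.
have kerR y : dot y f = 0 -> dot y g = 0 -> (y <= kermx R)%MS.
  move=> /eqP yf /eqP yg; rewrite sub_kermx mul_mx_row.
  by move: yf yg; rewrite -!dot_eq0 => /eqP -> /eqP ->; rewrite row_mx0.
have [_] := mxrank_leqif_eq (kerR x0 x0f x0g).
rewrite rank_rV x00 mxrank_ker rR eqxx => /esym/eqmxP ->.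
exact: kerR.
Qed.
End ProjectivePlane.

Section PointCount.
Variable F : finFieldType.

Definition pg_coords (x : 'rV[F]_3) : (F * F) + (F + unit) :=
  if x 0 0 != 0 then inl (x 0 1 / x 0 0, x 0 2 / x 0 0)
  else if x 0 1 != 0 then inr (inl (x 0 2 / x 0 1)) else inr (inr tt).

Definition pg_vec (c : (F * F) + (F + unit)) : 'rV[F]_3 :=
  \row_i (match c with
          | inl (a, b) => [:: 1; a; b]
          | inr (inl a) => [:: 0; 1; a]
          | inr (inr _) => [:: 0; 0; 1]
          end)`_i.

Lemma row3P (x y : 'rV[F]_3) :
  x 0 0 = y 0 0 -> x 0 1 = y 0 1 -> x 0 2 = y 0 2 -> x = y.
Proof.
move=> e0 e1 e2; apply/rowP => -[[|[|[|//]]] lt3].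
- by rewrite (_ : Ordinal lt3 = 0) //; apply: val_inj.
- by rewrite (_ : Ordinal lt3 = 1) //; apply: val_inj.
- by rewrite (_ : Ordinal lt3 = 2) //; apply: val_inj.
Qed.

Lemma pg_vec_coords (x : 'rV[F]_3) :
  x != 0 -> exists2 l : F, l != 0 & x = l *: pg_vec (pg_coords x).
Proof.
move=> x_neq0; rewrite /pg_coords.
have [x0|x0] := eqVneq (x 0 0) 0; last first.
  by exists (x 0 0) => //; apply: row3P; rewrite !mxE /= ?mulr1 // mulrC divfK.
have [x1|x1] := eqVneq (x 0 1) 0; last first.
  by exists (x 0 1) => //; apply: row3P; rewrite !mxE /= ?mulr0 ?mulr1 // mulrC divfK.
exists (x 0 2); last by apply: row3P; rewrite !mxE /= ?mulr0 ?mulr1.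
by apply: contraNneq x_neq0 => x2; apply/eqP; apply: row3P; rewrite mxE.
Qed.

Lemma card_pg_points : (#|pg_points F| <= #|F| ^ 2 + #|F| + 1)%N.
Proof.
have coordsK : {in pg_points F, cancel (pg_coords \o @point_vec F)
                                      (fun c => <<pg_vec c>>%MS)}.
  move=> P /pg_pointP[/pg_vec_coords[l l_neq0 Pl] PE] /=.
  by rewrite {2}PE {2}Pl (eq_genmx (eqmx_scale _ l_neq0)).
rewrite -(card_in_imset (can_in_inj coordsK)).
apply: leq_trans (max_card _) _.
by rewrite card_sum card_prod card_sum card_unit expnS expn1 addnA.
Qed.
End PointCount.

Section BlockingSets.
Variable F : finFieldType.
Implicit Types (S : {set 'M[F]_3}) (P Q L : 'M[F]_3).

Lemma minimal_blocking_set_blocking S : minimal_blocking_set S -> blocking_set S.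
Proof. by case/andP. Qed.

Lemma blocking_set_sub S : blocking_set S -> S \subset pg_points F.
Proof. by case/andP. Qed.

Lemma blocking_setP S L : blocking_set S -> L \in pg_lines F ->
  exists2 Q, Q \in S & (Q <= L)%MS.
Proof. by case/andP => _ /forall_inP bS /bS /exists_inP. Qed.

Lemma minimal_blocking_set_tangent S P : minimal_blocking_set S -> P \in S ->
  exists2 L, L \in pg_lines F & (P <= L)%MS /\ {in S, forall Q, (Q <= L)%MS -> Q = P}.
Proof.
case/andP => bS /forallP minS PS.
have := implyP (minS (S :\ P)) (properD1 PS).
rewrite /blocking_set (subset_trans (subD1set S P) (blocking_set_sub bS)) /=.
case/forall_inPn => L Ll /exists_inPn notSP; exists L => //.
have tangent : {in S, forall Q, (Q <= L)%MS -> Q = P}.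
  move=> Q QS QL; apply/eqP; apply: contraTT QL => QP.
  by apply: notSP; rewrite in_setD1 QP QS.
have [Q QS QL] := blocking_setP bS Ll.
by split=> //; rewrite -(tangent Q QS QL).
Qed.
End BlockingSets.

Section TangentCoordinates.
Variables (F : finFieldType) (S : {set 'M[F]_3}) (P : 'M[F]_3) (f g h : 'cV[F]_3).
Hypotheses (S_blocking : blocking_set S) (PS : P \in S) (f_neq0 : f != 0).
Hypothesis tangent : {in S, forall Q, dot (point_vec Q) f = 0 -> Q = P}.
Hypotheses (Pf : dot (point_vec P) f = 0) (Pg : dot (point_vec P) g = 0).
Hypothesis Ph : dot (point_vec P) h = 1.
Hypothesis g_neq_scale_f : forall c, g != c *: f.
Hypothesis sub_P : forall x, dot x f = 0 -> dot x g = 0 -> (x <= point_vec P)%MS.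

Let S_points : {subset S <= pg_points F} := subsetP (blocking_set_sub S_blocking).

Definition frame_slope Q := dot (point_vec Q) g / dot (point_vec Q) f.
Definition frame_intercept Q := dot (point_vec Q) h / dot (point_vec Q) f.
Local Notation slope := frame_slope.
Local Notation icept := frame_intercept.
Local Notation coords := [seq (slope Q, icept Q) | Q <- enum (S :\ P)].
Local Notation slopes := [set slope Q | Q in S :\ P].

Let slopes_coords : [set x.1 | x in coords] = slopes.
Proof.
apply/setP => a; apply/imsetP/imsetP => [[x /mapP[Q] + -> ->] | [Q QSP ->]].
  by rewrite mem_enum; exists Q.
by exists (slope Q, icept Q); rewrite // map_f ?mem_enum.
Qed.

Lemma tangent_coords_meet_lines m c : exists2 x, x \in coords & x.2 = x.1 * m + c.
Proof.
pose psi := h - m *: g - c *: f.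
have dot_psi x : dot x psi = dot x h - m * dot x g - c * dot x f.
  by rewrite /psi !dotD !dotN !dotZ.
have psi_neq0 : psi != 0.
  apply/eqP => psi0; have := dot_psi (point_vec P).
  by rewrite psi0 Pf Pg Ph /dot mulmx0 mxE !mulr0 !subr0 => /esym/eqP; rewrite oner_eq0.
have [Q QS] := blocking_setP S_blocking (ker_line psi_neq0).
rewrite pg_point_subE ?S_points //.
rewrite sub_ker_line dot_psi => /eqP Qpsi.
have QP : Q != P.
  apply/eqP => QP; move: Qpsi.
  by rewrite QP Pf Pg Ph !mulr0 !subr0 => /eqP; rewrite oner_eq0.
have Qf : dot (point_vec Q) f != 0.
  by apply: contra_neq QP => Qf; apply: tangent.
exists (slope Q, icept Q); first by apply: map_f; rewrite mem_enum in_setD1 QP.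
rewrite /= /icept /slope; apply/(canLR (mulfK Qf)).
by rewrite mulrDl mulrAC divfK //; apply/eqP; rewrite -subr_eq0 -Qpsi; apply/eqP; ring.
Qed.

Lemma card_tangent_slopes : (#|slopes| + #|F| <= #|S|)%N.
Proof.
have := card_slopes tangent_coords_meet_lines.
by rewrite slopes_coords size_map -cardE (cardsD1 P S) PS [(true + _)%N]addnC.
Qed.

Lemma card_blocking_outside (S' : {set 'M[F]_3}) :
  blocking_set S' -> P \notin S' -> (#|F| - #|slopes| < #|S' :\: S|)%N.
Proof.
move=> bS' PS'; have S'_points := subsetP (blocking_set_sub bS').
(* dir Q names the line through P and Q: None for the tangent ker f, Some c for
   the line ker (g - c f). *)
pose dir Q := if dot (point_vec Q) f == 0 then None else Some (slope Q).
have on_tangent : None \in dir @: (S' :\: S).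
  have [Q QS'] := blocking_setP bS' (ker_line f_neq0).
  rewrite pg_point_subE ?S'_points // sub_ker_line => /eqP Qf.
  apply/imsetP; exists Q; last by rewrite /dir Qf eqxx.
  by rewrite in_setD QS' andbT; apply: contra PS' => QS; rewrite -(tangent QS Qf).
have off_tangent c : c \notin slopes -> Some c \in dir @: (S' :\: S).
  move=> cA; have phi_neq0 : g - c *: f != 0 by rewrite subr_eq0 g_neq_scale_f.
  have [Q QS'] := blocking_setP bS' (ker_line phi_neq0).
  rewrite pg_point_subE ?S'_points // sub_ker_line dotD dotN dotZ subr_eq0 => /eqP Qg.
  have Qf : dot (point_vec Q) f != 0.
    apply: contraNneq PS' => Qf; have [Q_neq0 QE] := pg_pointP (S'_points _ QS').
    have Qg0 : dot (point_vec Q) g = 0 by rewrite Qg Qf mulr0.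
    have QP : (point_vec Q <= P)%MS := submx_trans (sub_P Qf Qg0) (nz_row_sub P).
    by rewrite (pg_point_gen (S_points PS) Q_neq0 QP) -QE.
  have slopeQ : slope Q = c by rewrite /slope Qg mulfK.
  apply/imsetP; exists Q; last by rewrite /dir (negbTE Qf) slopeQ.
  rewrite in_setD QS' andbT; apply: contra cA => QS; rewrite -slopeQ.
  by apply: imset_f; rewrite in_setD1 QS andbT; apply: contraNneq PS' => <-.
have sub : None |: [set Some c | c in ~: slopes] \subset dir @: (S' :\: S).
  apply/subsetP => o; rewrite in_setU1 => /orP [/eqP -> // | /imsetP [c]].
  by rewrite in_setC => /off_tangent + ->.
have := leq_trans (subset_leq_card sub) (leq_imset_card _ _).
rewrite cardsU1 card_imset; last exact: Some_inj.
have -> : None \notin [set Some c | c in ~: slopes] by apply/imsetP => -[].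
by rewrite -(cardsC slopes) addKn.
Qed.
End TangentCoordinates.

Section MinimalBlockingSets.
Variable F : finFieldType.
Implicit Types S : {set 'M[F]_3}.

Lemma card_blocking_setD S S' :
  minimal_blocking_set S -> blocking_set S' -> ~~ (S \subset S') ->
  (2 * #|F| + 1 <= #|S' :\: S| + #|S|)%N.
Proof.
move=> mS bS' /subsetPn [P PS PS'].
have bS := minimal_blocking_set_blocking mS.
have S_points := subsetP (blocking_set_sub bS).
have [L Ll [PL tangent]] := minimal_blocking_set_tangent mS PS.
have [f f_neq0 Lf] := pg_lineP Ll.
have [P_neq0 _] := pg_pointP (S_points _ PS).
have Pf : dot (point_vec P) f = 0 by apply/eqP; rewrite -Lf -pg_point_subE ?S_points.
have [g [h [Pg Ph gf sub_P]]] := flag_frame P_neq0 f_neq0 Pf.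
have tangent_f : {in S, forall Q, dot (point_vec Q) f = 0 -> Q = P}.
  by move=> Q QS /eqP Qf; apply: tangent; rewrite // pg_point_subE ?S_points ?Lf.
have := card_tangent_slopes bS PS tangent_f Pf Pg Ph.
have := card_blocking_outside bS PS f_neq0 tangent_f gf sub_P bS' PS'.
lia.
Qed.

Lemma card_minimal_blocking_setI S S' :
  minimal_blocking_set S -> minimal_blocking_set S' -> #|S| = #|S'| -> S != S' ->
  (#|S :&: S'| < 2 * #|S| - 2 * #|F|)%N.
Proof.
move=> mS mS' cS SS'.
have nsub : ~~ (S \subset S') by apply: contra SS' => sub; rewrite eqEcard sub cS /=.
have := card_blocking_setD mS (minimal_blocking_set_blocking mS') nsub.
have := cardsID S S'; rewrite setIC -cS; lia.
Qed.
End MinimalBlockingSets.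

Unset Implicit Arguments.

Theorem theorem2 (F : finFieldType) (k : nat) :
  (#|F| <= k <= 2 * #|F|)%N ->
  (nb_min_blocking F k)%:R
    <= ('C(#|F| ^ 2 + #|F| + 1, 2 * k - 2 * #|F|)%:R
        / 'C(k, 2 * k - 2 * #|F|)%:R :> rat).
Proof.
move=> /andP[qk k2q]; set m := (2 * k - 2 * #|F|)%N.
have Ckm_gt0 : (0 < 'C(k, m))%N by rewrite bin_gt0; lia.
rewrite ler_pdivlMr ?ltr0n // -natrM ler_nat.
apply: leq_trans (leq_bin2l _ (card_pg_points F)).
apply: card_family_bin_bound => [S | S S'].
  by rewrite inE => /andP[/minimal_blocking_set_blocking/blocking_set_sub ? /eqP].
rewrite !inE => /andP[mS /eqP cS] /andP[mS' /eqP cS'] SS'.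
by have := card_minimal_blocking_setI mS mS' (etrans cS (esym cS')) SS'; rewrite cS.
Qed.
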